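(* Let $l$ be a prime, $\tilde\chi$ a Dirichlet character modulo $l$ with associated character $\chi$, and $f\in S_2^k(\Gamma_0^{(2)}(l),\chi)$. Let $s$ be a symmetric positive definite integral $2\times 2$ matrix with $l'=\det(s)$, $l\nmid l'$. Let $W_l=\begin{pmatrix}lx&y\\ ll'z&lw\end{pmatrix}$ with $x,y,z,w\in\mathbb{Z}$ and $\det W_l=l$ (so $\begin{pmatrix}x&y\\ l'z&lw\end{pmatrix}\in\mathrm{SL}_2(\mathbb{Z})$). Then \[W_l\,\phi_s^*f(\tau)=l^k\,\chi(l'z^2)\,\phi_{ls}^*(f|_{E_2})(\tau).\]
   Context: $\Gamma_0^{(2)}(l)=\{\begin{pmatrix}A&B\\C&D\end{pmatrix}\in \mathrm{Sp}_4(\mathbb{Z}) : C\equiv 0 \pmod l\}$; for $M=\begin{pmatrix}A&B\\C&D\end{pmatrix}$, $F|_kM(Z)=\det(CZ+D)^{-k}F((AZ+B)(CZ+D)^{-1})$ on the genus 2 Siegel upper half space; $\chi(M)=\tilde\chi(\det D)$, and for an integer $n$ prime to $l$, $\chi(n)=\tilde\chi(n)$. $S_2^k(\Gamma_0^{(2)}(l),\chi)$ is the space of Siegel cusp forms of degree 2, weight $k$ with $f|_kM=\chi(M)f$ for all $M\in\Gamma_0^{(2)}(l)$. $E_2=\begin{pmatrix}0&I_2\\-I_2&0\end{pmatrix}$. For a positive definite symmetric $2\times2$ matrix $s$ and a function $F$ on $\mathbb{H}_2$, $\phi_s^*(F)(\tau)=F(s\tau)$. For an elliptic form $g$ of weight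 $2k$ and $\gamma=\begin{pmatrix}a&b\\c&d\end{pmatrix}\in\mathrm{GL}_2^+(\mathbb{Q})$, $(g|\gamma)(\tau)=\det(\gamma)^k(c\tau+d)^{-2k}g(\gamma\tau)$, and $W_l g:=g|W_l$. *)

From HB Require Import structures.
From mathcomp Require Import all_boot all_order all_algebra.
From mathcomp Require Import all_classical all_reals all_analysis.
From mathcomp Require Import complex.
Import Order.TTheory GRing.Theory Num.Theory.
Import numFieldNormedType.Exports.

Set Implicit Arguments.
Unset Strict Implicit.
Unset Printing Implicit Defensive.

Local Open Scope classical_set_scope.
Local Open Scope ring_scope.

Definition mx2 (a b c d : int) : 'M[int]_2 :=
  \matrix_(i < 2, j < 2)
    if i == 0 then (if j == 0 then a else b) else (if j == 0 then c else d).

Definition E2 : 'M[int]_(2 + 2) := block_mx 0 1%:M (- 1%:M) 0.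

Definition is_Sp4Z (M : 'M[int]_(2 + 2)) : Prop := M^T *m E2 *m M = E2.
Definition is_Gamma0_2 (l : nat) (M : 'M[int]_(2 + 2)) : Prop :=
  is_Sp4Z M /\ forall i j, (l%:Z %| dlsubmx M i j)%Z.

Section SiegelDefs.
Variable R : realType.

Definition toC (z : int) : R[i] := z%:~R.
Definition mxC m n (M : 'M[int]_(m, n)) : 'M[R[i]]_(m, n) := map_mx toC M.

Definition posdef (S : 'M[R]_2) : Prop :=
  forall v : 'cV[R]_2, v != 0 -> 0 < (v^T *m S *m v) 0 0.

Definition inH1 (tau : R[i]) : Prop := 0 < complex.Im tau.
Definition inH2 (Z : 'M[R[i]]_2) : Prop :=
  Z^T = Z /\ posdef (map_mx (@complex.Im R) Z).

Definition slash2 (k : nat) (M : 'M[int]_(2 + 2)) (F : 'M[R[i]]_2 -> R[i])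
  (Z : 'M[R[i]]_2) : R[i] :=
  let A := mxC (ulsubmx M) in let B := mxC (ursubmx M) in
  let C := mxC (dlsubmx M) in let D := mxC (drsubmx M) in
  (\det (C *m Z + D)) ^- k * F ((A *m Z + B) *m invmx (C *m Z + D)).

Definition sym_dirs : seq 'M[R[i]]_2 :=
  [:: delta_mx 0 0; delta_mx 1 1; delta_mx 0 1 + delta_mx 1 0].

(* holomorphy on H_2: complex differentiability in each of the three
   independent coordinates (by Hartogs' theorem this is holomorphy) *)
Definition holomorphic_H2 (F : 'M[R[i]]_2 -> R[i]) : Prop :=
  forall Z, inH2 Z -> forall E, E \in sym_dirs ->
    derivable (fun t : R[i]^o => (F (Z + (t : R[i]) *: E) : R[i]^o)) 0 1.

Definition diag2 (a b : R[i]) : 'M[R[i]]_2 :=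
  \matrix_(i < 2, j < 2) if i == j then (if i == 0 then a else b) else 0.

Definition dirichlet_char (l : nat) (chi : int -> R[i]) : Prop :=
  [/\ forall m n : int, chi (m * n) = chi m * chi n,
      forall m : int, chi (m + l%:Z) = chi m,
      chi 1 = 1 &
      forall m : int, chi m != 0 <-> coprime (absz m) l].

(* Siegel cusp forms S_2^k(Gamma_0^(2)(l), chi): holomorphic on H_2,
   modular for Gamma_0^(2)(l) with character chi(M) = chi~(det D),
   and vanishing Siegel Phi operator at every cusp. *)
Definition is_cusp_form (l k : nat) (chi : int -> R[i])
  (F : 'M[R[i]]_2 -> R[i]) : Prop :=
  [/\ holomorphic_H2 F,
      (forall M, is_Gamma0_2 l M -> forall Z, inH2 Z ->
          slash2 k M F Z = chi (\det (drsubmx M)) * F Z) &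
      (forall M, is_Sp4Z M -> forall tau, inH1 tau ->
          (fun t : R => (slash2 k M F (diag2 tau (Complex 0 t)) : R[i]^o))
             x @[x --> +oo] --> (0 : R[i]^o))].

Definition phis (s : 'M[int]_2) (F : 'M[R[i]]_2 -> R[i]) (tau : R[i]) : R[i] :=
  F (tau *: mxC s).

Definition eslash (k : nat) (g : R[i] -> R[i]) (gam : 'M[int]_2)
  (tau : R[i]) : R[i] :=
  let a := toC (gam 0 0) in let b := toC (gam 0 1) in
  let c := toC (gam 1 0) in let d := toC (gam 1 1) in
  (toC (\det gam)) ^+ k * (c * tau + d) ^- (2 * k) *
    g ((a * tau + b) / (c * tau + d)).

End SiegelDefs.

(* Put Z0 = -(l tau s)^-1, so that (f|E_2)(l tau s) = det(l tau s)^-k f(Z0).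
   The block matrix W_lift = ((-y s, x), (-l w, z adj s)) is symplectic because
   x l w - y z det s = 1, and lies in Gamma_0^(2)(l) because its lower-left
   block is -l w; a short computation shows that it maps Z0 to (W_l tau) s.
   Modularity of f under W_lift, whose character value is
   chi(det(z adj s)) = chi(l' z^2), turns f((W_l tau) s) into f(Z0), and the
   two automorphy factors agree because the denominator of W_l tau is
   l tau times the scalar by which C Z0 + D acts on s^-1. *)
From HB Require Import structures.
From mathcomp Require Import all_boot all_order all_algebra.
From mathcomp Require Import all_classical all_reals all_analysis.
From mathcomp Require Import complex ring.
Import Order.TTheory GRing.Theory Num.Theory.
Import numFieldNormedType.Exports.
Local Open Scope classical_set_scope.
Local Open Scope ring_scope.
Set Implicit Arguments.
Unset Strict Implicit.
Unset Printing Implicit Defensive.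

Lemma ord2E (i : 'I_2) : i = if val i == 0%N then 0 else 1.
Proof. by case: i => -[|[|//]] ?; apply: val_inj. Qed.

Lemma sum_ord2 (V : nmodType) (F : 'I_2 -> V) : \sum_(i < 2) F i = F 0 + F 1.
Proof. by rewrite big_ord_recl big_ord1; congr (_ + F _); apply: val_inj. Qed.

Lemma lift_ord2 (i : 'I_2) (j : 'I_1) : lift i j = (if val i == 0%N then 1 else 0).
Proof. by rewrite (ord2E i) (ord1 j); case: (val i == 0%N); apply: val_inj. Qed.

Section TwoByTwo.
Variable R : comPzRingType.
Implicit Type A : 'M[R]_2.

Lemma det_mx2 A : \det A = A 0 0 * A 1 1 - A 0 1 * A 1 0.
Proof.
rewrite (expand_det_row A 0) sum_ord2 /cofactor !det_mx11 !mxE !lift_ord2 /=.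
by rewrite expr0 expr1; ring.
Qed.

Lemma adj_mx2 A : \adj A = (\tr A)%:M - A.
Proof.
apply/matrixP => i j; rewrite !mxE /cofactor det_mx11 /mxtrace sum_ord2.
rewrite (ord2E i) (ord2E j).
by case: (val i == 0%N); case: (val j == 0%N);
  rewrite !mxE !lift_ord2 /= ?expr0 ?expr1 ?sqrrN ?expr1n; ring.
Qed.

Lemma det_adj_mx2 A : \det (\adj A) = \det A.
Proof. by rewrite adj_mx2 !det_mx2 /mxtrace sum_ord2 !mxE /=; ring. Qed.
End TwoByTwo.

Lemma symplectic_block (R : comPzRingType) n (A B C D : 'M[R]_n) :
  let J := block_mx 0 1%:M (- 1%:M) 0 in
  A^T *m C = C^T *m A -> B^T *m D = D^T *m B -> A^T *m D - C^T *m B = 1%:M ->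
  (block_mx A B C D)^T *m J *m block_mx A B C D = J.
Proof.
move=> J symAC symBD unimod; rewrite /J tr_block_mx !mulmx_block.
rewrite !(mulmx0, mul0mx, mulmxN, mulmx1, addr0, add0r, mulNmx, mul1mx).
have unimodT : D^T *m A - B^T *m C = 1%:M.
  by rewrite -[1%:M]tr_scalar_mx -unimod linearB /= !trmx_mul !trmxK.
congr block_mx; first by rewrite symAC addNr.
- by rewrite addrC unimod.
- by rewrite -unimodT opprB addrC.
- by rewrite symBD addNr.
Qed.

Section Casts.
Variable R : realType.

Lemma toC_real (a : int) : toC R a = ((a%:~R : R)%:C)%C.
Proof. by rewrite /toC rmorph_int. Qed.

Lemma toCM (a b : int) : toC R (a * b) = toC R a * toC R b.
Proof. exact: intrM. Qed.

Lemma toCN (a : int) : toC R (- a) = - toC R a.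
Proof. exact: intrN. Qed.

Lemma mxCZ m n a (M : 'M[int]_(m, n)) : mxC R (a *: M) = toC R a *: mxC R M.
Proof. exact: map_mxZ. Qed.

Lemma mxC_scalar n a : mxC R (a%:M : 'M[int]_n) = (toC R a)%:M.
Proof. exact: map_scalar_mx. Qed.

Lemma mxC_adj n (M : 'M[int]_n) : mxC R (\adj M) = \adj (mxC R M).
Proof. exact: map_mx_adj. Qed.

Lemma det_mxC n (M : 'M[int]_n) : \det (mxC R M) = toC R (\det M).
Proof. exact: det_map_mx. Qed.

Lemma mxC_real m n (M : 'M[int]_(m, n)) :
  mxC R M = map_mx (real_complex R) (map_mx (fun a : int => a%:~R) M).
Proof. by apply/matrixP => i j; rewrite !mxE toC_real. Qed.
End Casts.

Section PositiveDefinite.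
Variable R : realType.
Implicit Type S : 'M[R]_2.

Lemma posdef_unitmx S : posdef S -> S \in unitmx.
Proof.
move=> Spos; rewrite unitmxE unitfE; apply/det0P => -[v v0 vS0].
have := Spos v^T; rewrite trmx_eq0 trmxK vS0 mul0mx mxE ltxx.
by move/(_ v0).
Qed.

Lemma posdefZ (a : R) S : 0 < a -> posdef S -> posdef (a *: S).
Proof.
by move=> a0 Spos v v0; rewrite -scalemxAr -scalemxAl mxE mulr_gt0 ?Spos.
Qed.

Lemma posdef_invmx S : S^T = S -> posdef S -> posdef (invmx S).
Proof.
move=> Ssym Spos v v0; have Su := posdef_unitmx Spos.
have Sv0 : invmx S *m v != 0.
  by apply: contraNneq v0 => /(congr1 (mulmx S)); rewrite mulKVmx // mulmx0 => ->.
have := Spos _ Sv0.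
by rewrite trmx_mul trmx_inv Ssym -!mulmxA mulKVmx.
Qed.
End PositiveDefinite.

Section UpperHalfSpace.
Variable R : realType.
Local Open Scope complex_scope.

Lemma Im_mul_real (a : R[i]) (r : R) : complex.Im (a * r%:C) = complex.Im a * r.
Proof. by case: a => p q /=; rewrite mulr0 add0r. Qed.

Lemma Im_oppV_gt0 (t : R[i]) : 0 < complex.Im t -> 0 < complex.Im (- t^-1).
Proof.
case: t => p q /= q0; rewrite opprK.
by rewrite divr_gt0 // ltr_wpDl ?sqr_ge0 ?exprn_gt0.
Qed.

Lemma inH2_scale_real (a : R[i]) (S : 'M[R]_2) :
  0 < complex.Im a -> S^T = S -> posdef S -> inH2 (a *: map_mx (real_complex R) S).
Proof.
move=> a0 Ssym Spos; split; first by rewrite linearZ /= map_trmx Ssym.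
have -> : map_mx (@complex.Im R) (a *: map_mx (real_complex R) S) = complex.Im a *: S.
  by apply/matrixP => i j; rewrite !mxE Im_mul_real.
exact: posdefZ.
Qed.
End UpperHalfSpace.

Lemma invmxN (K : comUnitRingType) n (A : 'M[K]_n) : invmx (- A) = - invmx A.
Proof.
have uN1 : (-1 : K) \is a GRing.unit by rewrite unitrN1.
rewrite -!scaleN1r; have [uA | nuA] := boolP (A \in unitmx).
  by rewrite invmxZ ?unitmxZ // invrN1.
by rewrite !invmx_out // inE ?unitmxZ.
Qed.

Section Slash.
Variables (R : realType) (k : nat) (F : 'M[R[i]]_2 -> R[i]).

Lemma slash2_E2 (Z : 'M[R[i]]_2) :
  slash2 k E2 F Z = (\det Z) ^- k * F (- invmx Z).
Proof.
rewrite /slash2 /E2 block_mxKul block_mxKur block_mxKdl block_mxKdr.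
rewrite /mxC /toC map_mx0 map_mxN map_mx1 mulNmx !mul1mx mul0mx add0r addr0.
by rewrite invmxN mul1mx -scaleN1r detZ sqrrN expr1n mul1r.
Qed.

Lemma slash2_block_invmx (s : 'M[int]_2) (a b c e : int) (u : R[i]) :
  let S := mxC R s in let v := toC R c * u + toC R e * \det S in
  S \in unitmx -> v != 0 ->
  slash2 k (block_mx (a *: s) b%:M c%:M (e *: \adj s)) F (u *: invmx S)
  = (v ^+ 2 / \det S) ^- k * F ((toC R a * u + toC R b) / v *: S).
Proof.
move=> S v Su v0; have dS0 : \det S != 0 by rewrite -unitfE.
rewrite /slash2 block_mxKul block_mxKur block_mxKdl block_mxKdr.
rewrite !mxCZ !mxC_scalar mxC_adj -/S.
have adjS : \adj S = \det S *: invmx S by rewrite /invmx Su scalerA mulfV ?scale1r.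
have -> : (toC R c)%:M *m (u *: invmx S) + toC R e *: \adj S = v *: invmx S.
  by rewrite mul_scalar_mx adjS !scalerA -scalerDl.
have -> : toC R a *: S *m (u *: invmx S) + (toC R b)%:M = (toC R a * u + toC R b)%:M.
  by rewrite -scalemxAl -scalemxAr mulmxV // !scale_scalar_mx mulr1 raddfD.
rewrite detZ det_inv invmxZ ?unitmxZ ?unitmx_inv ?unitfE // invmxK.
by rewrite mul_scalar_mx scalerA.
Qed.
End Slash.

Lemma mobius_denom_neq0 (R : realType) (tau : R[i]) (c e : int) :
  inH1 tau -> (c != 0) || (e != 0) -> toC R c * tau + toC R e != 0.
Proof.
move=> tauH; have [-> /= e0 | c0 _] := eqVneq c 0.
  by rewrite /toC mul0r add0r intr_eq0.
apply: contraTneq tauH => /(congr1 (@complex.Im R)).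
rewrite /inH1 raddfD /= mulrC !toC_real Im_mul_real /= addr0 => /eqP.
by rewrite mulf_eq0 intr_eq0 (negPf c0) orbF => /eqP ->; rewrite ltxx.
Qed.

Lemma W_reduced_SL2 (l x y c w : int) : l != 0 ->
  \det (mx2 (l * x) y (l * c) (l * w)) = l -> \det (mx2 x y c (l * w)) = 1.
Proof.
move=> l0 detW; apply: (mulfI l0).
by rewrite mulr1 -[RHS]detW !det_mx2 !mxE /=; ring.
Qed.

Definition W_lift (l : nat) (s : 'M[int]_2) (x y z w : int) : 'M[int]_(2 + 2) :=
  block_mx (- y *: s) x%:M (- (l%:Z * w))%:M (z *: \adj s).

Lemma W_lift_Gamma0 (l : nat) (s : 'M[int]_2) (x y z w : int) :
  s^T = s -> \det (mx2 x y (\det s * z) (l%:Z * w)) = 1 ->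
  is_Gamma0_2 l (W_lift l s x y z w).
Proof.
rewrite (det_mx2 (mx2 _ _ _ _)) !mxE /= => sT unimod; split.
  apply: symplectic_block; rewrite tr_scalar_mx ?linearZ /= ?trmx_adj sT.
  - by rewrite mul_mx_scalar mul_scalar_mx !scalerA mulrC.
  - by rewrite mul_mx_scalar mul_scalar_mx !scalerA mulrC.
  rewrite -scalemxAl mul_mx_adj !scale_scalar_mx -scalar_mxM -raddfB /=.
  by rewrite -unimod; congr _%:M; ring.
move=> i j; rewrite block_mxKdl mxE.
by case: (i == j); rewrite ?mulr0n ?dvdz0 // mulr1n rpredN dvdz_mulr.
Qed.

Section AtkinLehnerPoint.
Variables (R : realType) (l : nat) (s : 'M[int]_2) (x y z w : int) (tau : R[i]).
Hypotheses (l_gt0 : (0 < l)%N) (sT : s^T = s)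
  (s_pos : posdef (map_mx (fun n : int => n%:~R : R) s))
  (unimod : \det (mx2 x y (\det s * z) (l%:Z * w)) = 1) (tauH : inH1 tau).

Let S := mxC R s.
Let u := - (toC R l * tau)^-1.
Let v := toC R (- (l%:Z * w)) * u + toC R z * \det S.

Let tau0 : tau != 0.
Proof. by apply: contraTneq tauH => ->; rewrite /inH1 ltxx. Qed.

Let lC0 : toC R l != 0.
Proof. by rewrite /toC intr_eq0 eqz_nat -lt0n. Qed.

Let S_unit : S \in unitmx.
Proof. by rewrite /S mxC_real map_unitmx posdef_unitmx. Qed.

Let dC0 : toC R (\det s) != 0.
Proof. by rewrite -det_mxC -unitfE. Qed.

Lemma Z0_inH2 : inH2 (u *: invmx S).
Proof.
rewrite /S mxC_real -map_invmx; apply: inH2_scale_real.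
- by rewrite /u mulrC toC_real; apply/Im_oppV_gt0; rewrite Im_mul_real mulr_gt0 ?ltr0z.
- by rewrite trmx_inv map_trmx sT.
- by apply: posdef_invmx; rewrite // map_trmx sT.
Qed.

Let v_neq0 : v != 0.
Proof.
have -> : v = tau^-1 * (toC R (z * \det s) * tau + toC R w).
  by rewrite /v /u det_mxC toCN !toCM; field; rewrite tau0 lC0.
rewrite mulf_neq0 ?invr_eq0 // mobius_denom_neq0 //.
apply/negPn/negP => /norP[/negPn/eqP zd0 /negPn/eqP w0].
have : x * (l%:Z * w) - y * (z * \det s) = 1.
  by rewrite -unimod (det_mx2 (mx2 _ _ _ _)) !mxE /=; ring.
by rewrite zd0 w0 !(mulr0, mul0r) subr0 => /eqP.
Qed.

Let D := toC R (l%:Z * \det s * z) * tau + toC R (l%:Z * w).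

Lemma slash2_W_lift k (F : 'M[R[i]]_2 -> R[i]) :
  slash2 k (W_lift l s x y z w) F (u *: invmx S)
  = (v ^+ 2 / \det S) ^- k * F ((toC R (l%:Z * x) * tau + toC R y) / D *: S).
Proof.
rewrite slash2_block_invmx // ?v_neq0 // -/v.
have -> : D = toC R l * tau * v.
  by rewrite /D /v /u det_mxC toCN !toCM; field; rewrite tau0 lC0.
have -> : toC R (l%:Z * x) * tau + toC R y = toC R l * tau * (toC R (- y) * u + toC R x).
  by rewrite /u toCN !toCM; field; rewrite tau0 lC0.
by rewrite -mulf_div divff ?mul1r ?mulf_neq0.
Qed.

Lemma slash2_E2_scaled k (F : 'M[R[i]]_2 -> R[i]) :
  slash2 k E2 F (tau *: mxC R (l%:Z *: s))
  = ((toC R l * tau) ^+ 2 * \det S) ^- k * F (u *: invmx S).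
Proof.
rewrite slash2_E2 mxCZ scalerA [tau * _]mulrC -/S detZ.
by rewrite invmxZ ?unitmxZ ?unitfE ?mulf_neq0 // -scaleNr.
Qed.

Lemma W_denom_sqr : D ^+ 2 = (toC R l * tau) ^+ 2 * \det S * (v ^+ 2 / \det S).
Proof.
by rewrite /D /v /u det_mxC toCN !toCM; field; rewrite dC0 tau0 lC0.
Qed.
End AtkinLehnerPoint.

Theorem proposition4p3 (R : realType) (l k : nat) (chi : int -> R[i])
  (f : 'M[R[i]]_2 -> R[i]) (s : 'M[int]_2) (x y z w : int) :
  prime l ->
  dirichlet_char l chi ->
  is_cusp_form l k chi f ->
  s^T = s -> posdef (map_mx (fun n : int => n%:~R : R) s) ->
  ~~ (l%:Z %| \det s)%Z ->
  \det (mx2 (l%:Z * x) y (l%:Z * \det s * z) (l%:Z * w)) = l%:Z ->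
  forall tau : R[i], inH1 tau ->
    eslash k (phis s f) (mx2 (l%:Z * x) y (l%:Z * \det s * z) (l%:Z * w)) tau
    = (l%:R : R[i]) ^+ k * chi (\det s * z ^+ 2)
      * phis (l%:Z *: s) (slash2 k E2 f) tau.
Proof.
move=> l_prime _ [_ f_mod _] sT s_pos _ detW tau tauH.
have l_gt0 := prime_gt0 l_prime.
have unimod : \det (mx2 x y (\det s * z) (l%:Z * w)) = 1.
  by apply: W_reduced_SL2; rewrite ?mulrA // eqz_nat -lt0n.
have := f_mod _ (W_lift_Gamma0 sT unimod) _ (Z0_inH2 l_gt0 sT s_pos tauH).
rewrite slash2_W_lift // /W_lift block_mxKdr detZ det_adj_mx2 => W_mod.
rewrite /eslash /phis !mxE /= detW slash2_E2_scaled //.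
rewrite exprM W_denom_sqr // exprMn invfM.
set A := (_ * tau) ^+ 2 * _; set B := (_ ^+ 2 / _) in W_mod *.
set fP := f (_ *: mxC R s) in W_mod *.
by rewrite -!mulrA W_mod mulrCA [z ^+ 2 * _]mulrC; ring.
Qed.
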